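(* Let $X$ be a topological space and let $U$ be an ultrafilter on $\omega$. If $\varphi:Y_U\rightarrow \mathcal{F}(X)$ is lower semicontinuous and $\sup_{n<\omega}|\varphi(n)|<\omega$, then $\varphi$ has a continuous selection, i.e., there is a continuous $s:Y_U\rightarrow X$ with $s(y)\in\varphi(y)$ for all $y\in Y_U$.
   Context: $\mathcal{F}(X)$ denotes the set of nonempty closed subsets of $X$. A map $\varphi:Y\rightarrow\mathcal{F}(X)$ is lower semicontinuous if for every open $W\subseteq X$ the set $\{y\in Y:\varphi(y)\cap W\neq\emptyset\}$ is open in $Y$. For a filter $F$ on $\omega$, $Y_F$ is the space with underlying set $\omega\cup\{\infty\}$ in which each point of $\omega$ is isolated and the neighborhoods of $\infty$ are the sets $A\cup\{\infty\}$ with $A\in F$. *)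

From HB Require Import structures.
From mathcomp Require Import all_boot all_order all_algebra.
From mathcomp Require Import all_classical all_reals all_analysis.
Set Implicit Arguments. Unset Strict Implicit. Unset Printing Implicit Defensive.
Local Open Scope classical_set_scope.

(* The space Y_F: underlying set omega + {infinity}, modelled as [option nat]
   with [Some n] = n and [None] = infinity.  Points of omega are isolated and
   the neighbourhoods of infinity are the sets A \cup {infinity} with A in F. *)
Definition YF_open (F : set_system nat) (W : set (option nat)) : Prop :=
  W None -> F [set n | W (Some n)].

Definition YF_continuous (F : set_system nat) (X : topologicalType)
  (s : option nat -> X) : Prop :=
  forall V : set X, open V -> YF_open F (s @^-1` V).

Definition YF_FX (X : topologicalType) (phi : option nat -> set X) : Prop :=
  forall y, phi y !=set0 /\ closed (phi y).

Definition YF_lsc (F : set_system nat) (X : topologicalType)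
  (phi : option nat -> set X) : Prop :=
  forall W : set X, open W -> YF_open F [set y | phi y `&` W !=set0].

From HB Require Import structures.
From mathcomp Require Import all_boot all_order all_algebra.
From mathcomp Require Import all_classical all_reals all_analysis.
Local Open Scope classical_set_scope.
Local Open Scope card_scope.

(* Enumerate each phi(n) as h n 0, ..., h n (N-1) and pick p in phi(oo).
   Lower semicontinuity at oo says that every neighbourhood of p meets
   {h n i | i < N} for U-almost every n.  As U is an ultrafilter, one index i
   then serves all neighbourhoods at once, i.e. h n i --> p along U, and
   s(n) := h n i, s(oo) := p is a continuous selection. *)

Lemma ultra_finite_meets_cvg (T : Type) (X : topologicalType)
    (F : set_system T) (f : nat -> T -> X) (N : nat) (p : X) :
  UltraFilter F ->
  (forall W, nbhs p W -> F [set t | [set f i t | i in `I_N] `&` W !=set0]) ->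
  exists2 i, `I_N i & f i @ F --> p.
Proof.
move=> FU; elim: N => [|N IHN] meetW.
  by have /filter_ex[t [x [[i]]]] := meetW setT (@filterT _ _ (nbhs_filter p)).
have [cvgN|/existsNP[V /not_implyP[pV nFV]]] := pselect (f N @ F --> p).
  by exists N => /=.
(* f N eventually avoids V, so shrinking each W to W `&` V removes index N. *)
have FnV : F [set t | ~ V (f N t)].
  by have [] := in_ultra_setVsetC (f N @^-1` V) FU.
have [i iN cvgi] : exists2 i, `I_N i & f i @ F --> p.
  apply: IHN => W pW; apply: filterS (filterI (meetW _ (filterI pW pV)) FnV).
  move=> t [[x [[i iN1 <-] [Wx Vx]]] nVN]; exists (f i t); split=> //.
  exists i => //; move: iN1; rewrite /= ltnS leq_eqVlt => /orP[/eqP iN|//].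
  by rewrite iN in Vx.
by exists i => //=; exact: ltnW.
Qed.

Theorem mainTheorem1 (X : topologicalType) (U : set_system nat)
  (UU : UltraFilter U) (phi : option nat -> set X) :
  YF_FX phi -> YF_lsc U phi ->
  (exists N : nat, forall n : nat, phi (Some n) #<= `I_N) ->
  exists s : option nat -> X, YF_continuous U s /\ forall y, phi y (s y).
Proof.
move=> FX lsc [N cardN].
have [p phip] := (FX None).1.
have /choice[h hE] : forall n, exists h : nat -> X, h @` `I_N = phi (Some n).
  move=> n; have /pfcard_geP[phi0|[g]] := cardN n.
    by have := (FX (Some n)).1; rewrite phi0 => /set0P/eqP.
  by exists g; exact: image_eq.
have [i iN cvgi] : exists2 i, `I_N i & (fun n => h n i) @ U --> p.
  apply: (@ultra_finite_meets_cvg _ _ _ (fun i n => h n i) _ _ UU).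
  move=> W; rewrite nbhsE => -[W' [oW' W'p] W'W].
  apply: filterS (lsc W' oW' (ex_intro _ p (conj phip W'p))) => n /=.
  by rewrite -hE => -[x [hx /W'W Wx]]; exists x.
exists (fun y => if y is Some n then h n i else p); split.
  by move=> V oV /= Vp; apply: cvgi; exact: open_nbhs_nbhs.
by case=> [n|] //=; rewrite -hE; exists i.
Qed.
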